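(* Let $r,s$ be real numbers with $s\ge 1$ and $r\le s-1$, and let $G$ be a finite group. Then $T_G(r,s)\le 0$, with equality if and only if $G$ is cyclic.
   Context: $o(x)$ is the order of $x$, $\varphi$ is Euler's totient function, and $C_N$ is the cyclic group of order $N$. For a finite group $G$ and reals $r,s$, $R_G(r,s) := \sum_{x\in G} \frac{o(x)^s}{\varphi(o(x))^r}$ and $T_G(r,s) := R_G(r,s) - R_{C_{|G|}}(r,s)$. *)

From mathcomp Require Import all_boot all_fingroup all_algebra all_solvable.
From Stdlib Require Import Reals.
Set Implicit Arguments. Unset Strict Implicit. Unset Printing Implicit Defensive.

(* R_G(r,s) = sum_{x in G} o(x)^s / phi(o(x))^r, with real exponents via Rpower
   (bases are >= 1, so Rpower is the usual real power). *)
Definition RG (gT : finGroupType) (G : {set gT}) (r s : R) : R :=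
  \big[Rplus/0%R]_(x in G)
     Rdiv (Rpower (INR (order x)) s) (Rpower (INR (totient (order x))) r).

(* R_{C_N}: the cyclic group of order N, realised as Zp N (= 'Z_N, or the
   trivial group when N <= 1); #|Zp N| = N for N > 0. *)
Definition RC (N : nat) (r s : R) : R := RG (Zp N) r s.

Definition TG (gT : finGroupType) (G : {set gT}) (r s : R) : R :=
  Rminus (RG G r s) (RC #|G| r s).

From mathcomp Require Import all_boot all_fingroup all_algebra all_solvable.
From Stdlib Require Import Reals Lra.
From mathcomp Require Import Rstruct zify.
Set Implicit Arguments. Unset Strict Implicit. Unset Printing Implicit Defensive.
Import GRing.Theory Num.Theory.

(* Write weight d := d^s / phi(d)^r, so that R_G(r,s) is the sum of weight o(x)
   over G; for s >= 1 and r <= s - 1, weight d / d is monotone along divisibility.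
   Induct on n = |G|, with p the largest prime divisor of n.  If every element has
   order at most n / p, then R_G <= n weight(n) / p <= phi(n) weight(n) < R_{C_n},
   the last step counting the generators and the identity of C_n.  Otherwise some
   element has order > n / p, which forces the Sylow p-subgroup P to be cyclic and
   normal.  Grouping the elements of G by their coset mod P and, through
   Schur-Zassenhaus, by the conjugacy class of their p'-part gives
   R_G <= R_P R_{G/P}, with equality only if P is central, whereas
   R_{C_n} = R_{C_|P|} R_{C_{n/|P|}}; induction on G / P concludes, since G is
   cyclic when P is central and G / P is cyclic. *)


Lemma totient_mul_prime d p : prime p -> 0 < d ->
  totient (d * p) = if p %| d then totient d * p else totient d * p.-1.
Proof.
move=> p_pr d_gt0; case: ifP => p_dv_d; last first.
  have cop : coprime d p by rewrite coprime_sym prime_coprime // p_dv_d.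
  by rewrite totient_coprime // (totient_prime p_pr).
have p_gt0 := prime_gt0 p_pr.
have dp_gt0 : 0 < d * p by rewrite muln_gt0 d_gt0 p_gt0.
have log_gt0 : 0 < logn p d by rewrite logn_gt0 mem_primes p_pr d_gt0 p_dv_d.
have dp_p : (d * p)`_p = d`_p * p.
  by rewrite partnM // (part_pnat_id (pnat_id p_pr)).
have dp_p' : (d * p)`_p^' = d`_p^'.
  by rewrite partnM // [p`_p^']part_p'nat ?muln1 // pnatNK pnat_id.
have -> : totient (d * p) = totient (d`_p * p) * totient d`_p^'.
  by rewrite -{1}(partnC p dp_gt0) totient_coprime ?coprime_partC // dp_p dp_p'.
have -> : totient d = totient d`_p * totient d`_p^'.
  by rewrite -{1}(partnC p d_gt0) totient_coprime ?coprime_partC.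
rewrite p_part -expnSr !totient_pfactor // -(prednK log_gt0) expnS /=; nia.
Qed.

Lemma totient_dvd n d : 0 < n -> d %| n ->
  totient d <= totient n /\ totient n * d <= totient d * n.
Proof.
move=> n_gt0 d_dv_n; have [k] := ubnP (n %/ d).
elim: k d d_dv_n => // k IH d d_dv_n lt_q_k.
have d_gt0 : 0 < d by apply: dvdn_gt0 d_dv_n.
have n_eq : n = n %/ d * d by rewrite divnK.
have [q_gt1 | q_le1] := ltnP 1 (n %/ d); last first.
  have q_gt0 : 0 < n %/ d by rewrite divn_gt0 // dvdn_leq.
  by have -> : n = d by rewrite n_eq (_ : n %/ d = 1) ?mul1n //; lia.
pose p := pdiv (n %/ d); have p_pr : prime p by apply: pdiv_prime.
have dp_dv_n : d * p %| n by rewrite n_eq mulnC dvdn_pmul2r ?pdiv_dvd.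
have lt_qp_k : n %/ (d * p) < k.
  rewrite divnMA; have := ltn_Pdiv (prime_gt1 p_pr) (ltnW q_gt1); lia.
have [IH1 IH2] := IH _ dp_dv_n lt_qp_k.
have td_gt0 : 0 < totient d by rewrite totient_gt0.
have p_gt1 := prime_gt1 p_pr.
have [le_td le_ratio] : totient d <= totient (d * p) /\
    totient (d * p) * d <= totient d * (d * p).
  by rewrite totient_mul_prime //; case: ifP => _; split; nia.
split; first exact: leq_trans le_td IH1.
rewrite -(leq_pmul2r (_ : 0 < d * p)); first by nia.
by rewrite muln_gt0 d_gt0 prime_gt0.
Qed.

(* Removing the prime k+2 from n divides n / phi(n) by (k+2) / (k+1), so the
   bounds telescope. *)
Lemma leq_mul_totient k n : 0 < n -> (forall q, prime q -> q %| n -> q <= k.+1) ->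
  n <= k.+1 * totient n.
Proof.
elim: k n => [|k IH] n n_gt0 le_q.
  have [n_gt1|n_le1] := ltnP 1 n; last by have -> : n = 1 by lia.
  by have := le_q _ (pdiv_prime n_gt1) (pdiv_dvd n); have := prime_gt1 (pdiv_prime n_gt1); lia.
have [/andP[p_pr p_dv_n] | p_ndv] := boolP (prime k.+2 && (k.+2 %| n)); last first.
  suff: n <= k.+1 * totient n by nia.
  apply: IH => // q q_pr q_dv_n; have := le_q q q_pr q_dv_n.
  rewrite leq_eqVlt => /orP[/eqP q_eq | //].
  by move: p_ndv; rewrite -q_eq q_pr q_dv_n.
have log_gt0 : 0 < logn k.+2 n by rewrite logn_gt0 mem_primes p_pr n_gt0 p_dv_n.
have m_gt0 : 0 < n`_(k.+2)^' by apply: part_gt0.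
have le_q' : forall q, prime q -> q %| n`_(k.+2)^' -> q <= k.+1.
  move=> q q_pr q_dv_m; have := le_q q q_pr (dvdn_trans q_dv_m (dvdn_part _ _)).
  rewrite leq_eqVlt => /orP[/eqP q_eq | //].
  have /(pnatP _ m_gt0)/(_ q q_pr q_dv_m) : (k.+2)^'.-nat n`_(k.+2)^' by apply: part_pnat.
  by rewrite q_eq !inE eqxx.
have IHm := IH _ m_gt0 le_q'.
have e_tot : totient n = totient n`_(k.+2) * totient n`_(k.+2)^'.
  by rewrite -{1}(partnC k.+2 n_gt0) totient_coprime ?coprime_partC.
rewrite e_tot -[X in X <= _](partnC k.+2 n_gt0).
rewrite p_part totient_pfactor // -{1}(prednK log_gt0) expnS /=.
set a := expn _ _; set b := n`__; set c := totient b.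
have -> : k.+2 * a * b = k.+2 * (a * b) by nia.
have -> : k.+2 * (k.+1 * a * c) = k.+2 * (a * (k.+1 * c)) by nia.
by rewrite !leq_mul2l IHm !orbT.
Qed.

Local Open Scope group_scope.

Lemma order_cyclic_pgroup_setD (gT : finGroupType) (P C : {group gT}) p x y :
  prime p -> p.-group P -> cyclic P -> C \subset P ->
  x \in P :\: C -> y \in C ->
  (#[y] %| #[x])%nat /\ (p * #[y] <= #[x])%nat.
Proof.
move=> p_pr pP cycP sCP /setDP[Px nCx] Cy; have p_gt1 := prime_gt1 p_pr.
have ndvd : ~~ (#[x] %| #|C|)%nat by rewrite (cardSg_cyclic cycP) ?cycle_subG.
have [i ox] := p_natP (mem_p_elt pP Px).
have [j oC] := p_natP (pgroupS sCP pP).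
have [l oy] := p_natP (mem_p_elt (pgroupS sCP pP) Cy).
have le_lj : (l <= j)%nat by rewrite -(dvdn_Pexp2l _ _ p_gt1) -oy -oC order_dvdG.
have lt_ji : (j < i)%nat by rewrite ltnNge -(dvdn_Pexp2l _ _ p_gt1) -ox -oC.
have lt_li : (l < i)%nat by apply: leq_ltn_trans lt_ji.
by rewrite ox oy dvdn_Pexp2l // -expnS leq_pexp2l ?prime_gt0 // ltnW.
Qed.

Section NormalCyclicSylow.
Variables (gT : finGroupType) (G P : {group gT}) (p : nat).
Hypotheses (sylP : p.-Sylow(G) P) (nsPG : P <| G) (cycP : cyclic P).

Lemma mem_constt_Sylow x : x \in G -> x.`_p \in P.
Proof. by move=> Gx; rewrite (mem_normal_Hall sylP nsPG) ?p_elt_constt ?groupX. Qed.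

Lemma order_coset_p'elt z : z \in G -> p^'.-elt z -> #[coset P z] = #[z].
Proof.
move=> Gz p'z; have Nz : z \in 'N(P) := subsetP (normal_norm nsPG) z Gz.
apply/eqP; rewrite eqn_dvd morph_order //= order_dvdn.
have : z ^+ #[coset P z] \in P :&: <[z]>.
  rewrite inE mem_cycle andbT coset_idr ?groupX //.
  by rewrite morphX // expg_order.
by rewrite coprime_TIg ?inE // (pnat_coprime (pHall_pgroup sylP)).
Qed.

Lemma coset_constt' x : x \in G -> coset P x = coset P x.`_p^'.
Proof.
move=> Gx; have nPG := normal_norm nsPG.
have Px := mem_constt_Sylow Gx; have Gxp := subsetP (normal_sub nsPG) _ Px.
rewrite -{1}(consttC p x) morphM ?(subsetP nPG) ?groupX //.
by rewrite /= (coset_id Px) mul1g.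
Qed.

Lemma order_coset_constt' x : x \in G -> #[coset P x] = #[x.`_p^'].
Proof. by move=> Gx; rewrite coset_constt' // order_coset_p'elt ?groupX ?p_elt_constt. Qed.

(* Schur-Zassenhaus: <[x.`_p^']> and <[g]> are complements of P in P <[g]>, hence
   conjugate under P. *)
Lemma constt'_coset_class g x : g \in G -> p^'.-elt g -> x \in G ->
  coset P x = coset P g -> x.`_p^' \in g ^: P.
Proof.
move=> Gg p'g Gx eq_x; set z := x.`_p^'.
have nPG := normal_norm nsPG; have sPG := normal_sub nsPG.
have Gz : z \in G by apply: groupX.
have eq_z : coset P z = coset P g by rewrite -coset_constt'.
have mem_P a b : a \in G -> b \in G -> coset P a = coset P b -> a * b^-1 \in P.
  by move=> Ga Gb eq_ab; rewrite -mem_rcoset; apply/rcoset_kercosetP; rewrite ?(subsetP nPG).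
have nPg : <[g]> \subset 'N(P) by rewrite cycle_subG (subsetP nPG).
have sz_Pg : <[z]> \subset P * <[g]>.
  rewrite -norm_joinEr // cycle_subG /= norm_joinEr // -(mulgKV g z).
  by rewrite mem_mulg ?cycle_id ?mem_P.
have coPg : coprime #|P| #|<[g]>| := pnat_coprime (pHall_pgroup sylP) p'g.
have oz : #|<[z]>| = #|<[g]>|.
  by rewrite -!/(order _) -order_coset_p'elt ?p_elt_constt // eq_z order_coset_p'elt.
have [u Pu z_eq] := SchurZassenhaus_trans_sol (abelian_sol (cyclic_abelian cycP)) nPg sz_Pg coPg oz.
have Gu := subsetP sPG u Pu; set w := g ^ u; have Gw : w \in G by rewrite groupJ.
have eq_w : coset P w = coset P g.
  by rewrite morphJ ?(subsetP nPG) //= (coset_id Pu) conjg1.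
have /cycleP[i z_i] : z \in <[w]> by rewrite cycleJ -z_eq cycle_id.
have : z * w^-1 \in P :&: <[w]>.
  by rewrite inE mem_P ?eq_z ?eq_w // z_i groupM ?groupV ?mem_cycle ?cycle_id.
rewrite coprime_TIg; last by rewrite -/(order w) orderJ.
rewrite inE => /eqP/(congr1 (mulg^~ w)); rewrite /= mulgKV mul1g => ->.
exact: memJ_class.
Qed.

Lemma constt_mul_p'elt y z : y \in P -> p^'.-elt z -> commute y z ->
  (y * z).`_p = y /\ (y * z).`_p^' = z.
Proof.
move=> Py p'z cyz; have py : p.-elt y := mem_p_elt (pHall_pgroup sylP) Py.
rewrite !consttM // (constt_p_elt py) (constt_p_elt p'z).
have -> : z.`_p = 1 by apply/constt1P.
have -> : y.`_p^' = 1 by apply/constt1P; rewrite /p_elt pnatNK.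
by rewrite mulg1 mul1g.
Qed.

Lemma cent1_class g z : z \in g ^: P -> 'C_P[z] = 'C_P[g].
Proof.
case/imsetP => u Pu ->; rewrite cent1J -{1}(conjGid Pu) -conjIg.
apply/normP; apply: (subsetP (cent_sub _)); apply: (subsetP (centS (subsetIl P 'C[g]))).
exact: (subsetP (cyclic_abelian cycP)).
Qed.

Lemma coset_fibreE g z x : g \in G -> p^'.-elt g -> z \in g ^: P ->
  [&& x \in G, coset P x == coset P g & x.`_p^' == z] =
  (x \in (fun y => y * z) @: 'C_P[z]).
Proof.
move=> Gg p'g /imsetP[u Pu z_eq]; have Gu := subsetP (normal_sub nsPG) u Pu.
have Gz : z \in G by rewrite z_eq groupJ.
have p'z : p^'.-elt z by rewrite z_eq p_eltJ.
have coset_z : coset P z = coset P g.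
  by rewrite z_eq morphJ ?(subsetP (normal_norm nsPG)) //= (coset_id Pu) conjg1.
apply/and3P/imsetP => [[Gx /eqP eq_x /eqP x_z] | [y /subcent1P[Py cyz] ->]].
  exists x.`_p; last by rewrite -x_z consttC.
  apply/subcent1P; split; first exact: mem_constt_Sylow.
  by rewrite -x_z; apply/commute_sym/commuteX2.
have [_ ->] := constt_mul_p'elt Py p'z (commute_sym cyz).
have Gy := subsetP (normal_sub nsPG) y Py.
by split; rewrite ?groupM ?eqxx ?coset_kerl ?coset_z.
Qed.

(* A generator of P times the p'-part of a lift of a generator of G / P generates G. *)
Lemma cyclic_central_Sylow : P \subset 'C(G) -> cyclic (G / P) -> cyclic G.
Proof.
move=> cPG /cyclicP[c quo_eq]; have sPG := normal_sub nsPG.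
have /morphimP[g _ Gg c_eq] : c \in G / P by rewrite quo_eq cycle_id.
have [a P_eq] := cyclicP cycP; have Pa : a \in P by rewrite P_eq cycle_id.
set b := g.`_p^'; have Gb : b \in G by apply: groupX.
have oa : #[a] = #|P| by rewrite P_eq.
have ob : #[b] = #|G / P| by rewrite -order_coset_constt' // -c_eq quo_eq.
have cab : commute a b by apply: (centP (subsetP cPG a Pa)).
have coab : coprime #[a] #[b].
  by rewrite oa (pnat_coprime (pHall_pgroup sylP)) //; apply: p_elt_constt.
apply/cyclicP; exists (a * b); apply/eqP; rewrite eq_sym eqEcard.
rewrite cycle_subG groupM ?(subsetP sPG a Pa) //=.
have -> : #|<[a * b]>| = #[a * b] by [].
by rewrite orderM // oa ob card_quotient ?normal_norm // (Lagrange sPG).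
Qed.

End NormalCyclicSylow.

Lemma normal_cyclic_Sylow_of_elt (gT : finGroupType) (G : {group gT}) p x :
  prime p -> x \in G -> (#|G| < p * #[x])%nat ->
  exists P : {group gT}, [/\ p.-Sylow(G) P, P <| G & cyclic P].
Proof.
move=> p_pr Gx lt_G; set P := <[x.`_p]>%G; exists P.
have sxG : <[x]> \subset G by rewrite cycle_subG.
set k := #|G : <[x]>|; have G_eq : #|G| = (#[x] * k)%nat by rewrite /k Lagrange.
have lt_kp : (k < p)%nat by rewrite -(ltn_pmul2l (order_gt0 x)) -G_eq mulnC.
have p'k : ~~ (p %| k) by rewrite (contra (dvdn_leq (indexg_gt0 _ _))) // -ltnNge.
have sPx : P \subset <[x]> by rewrite cycle_subG cycle_constt.
have sylP : p.-Sylow(G) P.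
  rewrite pHallE (subset_trans sPx sxG) /= -/(order _) order_constt G_eq.
  by rewrite partnM ?order_gt0 ?indexg_gt0 // (part_p'nat (n := k)) ?muln1 // p'natE.
have nPx : <[x]> \subset 'N_G(P).
  rewrite subsetI sxG /= (subset_trans _ (cent_sub _)) // centsC.
  exact: subset_trans sPx (cycle_abelian x).
have sNG : 'N_G(P) \subset G := subsetIl _ _.
(* The number #|G : 'N_G(P)| of Sylow p-subgroups is at most k < p and is 1 mod p. *)
have index_N : #|G : 'N_G(P)| = 1%nat.
  have le_Nk : (#|G : 'N_G(P)| <= k)%nat.
    by rewrite /k -(Lagrange_index sNG nPx) leq_pmulr ?indexg_gt0.
  have := card_Syl_mod G p_pr; rewrite (card_Syl sylP) modn_small //.
  exact: leq_ltn_trans le_Nk lt_kp.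
split; rewrite ?cycle_cyclic // /normal (pHall_sub sylP) /=.
by rewrite -(index1g sNG index_N) subsetIr.
Qed.

Local Open Scope R_scope.

Lemma INR_gt0 (n : nat) : (0 < n)%nat -> 0 < INR n.
Proof. by move=> n_gt0; apply/lt_0_INR/ltP. Qed.

Lemma INR_leq (m n : nat) : (m <= n)%nat -> INR m <= INR n.
Proof. by move=> le_mn; apply/le_INR/leP. Qed.

Lemma INR_totient_gt0 (n : nat) : (0 < n)%nat -> 0 < INR (totient n).
Proof. by rewrite -totient_gt0; apply: INR_gt0. Qed.

Lemma ln_le x y : 0 < x -> x <= y -> ln x <= ln y.
Proof. by move=> x_gt0 [lt_xy | ->]; [left; apply: ln_increasing | right]. Qed.

Lemma exp_le x y : x <= y -> exp x <= exp y.
Proof. by move=> [lt_xy | ->]; [left; apply: exp_increasing | right]. Qed.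

Section Weight.
Variables r s : R.

Definition weight (d : nat) : R := Rpower (INR d) s / Rpower (INR (totient d)) r.

Lemma weightE d : weight d = exp (s * ln (INR d) - r * ln (INR (totient d))).
Proof. by rewrite /weight /Rpower /Rdiv /Rminus exp_plus exp_Ropp. Qed.

Lemma weight_gt0 d : 0 < weight d.
Proof. by rewrite weightE; apply: exp_pos. Qed.

Lemma weight1 : weight 1 = 1.
Proof. by rewrite weightE /= ln_1 !Rmult_0_r Rminus_0_r exp_0. Qed.

Lemma weightM a b : coprime a b -> (0 < a)%nat -> (0 < b)%nat ->
  weight (a * b) = weight a * weight b.
Proof.
move=> cop a_gt0 b_gt0; rewrite !weightE -exp_plus totient_coprime //.
have := INR_totient_gt0 a_gt0; have := INR_totient_gt0 b_gt0.
have := INR_gt0 a_gt0; have := INR_gt0 b_gt0 => *.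
by rewrite !mult_INR !ln_mult //; congr exp; ring.
Qed.

Hypotheses (s_ge1 : 1 <= s) (r_le : r <= s - 1).

(* weight d / d = d^(s-1) / phi(d)^r; both phi(d) <= phi(n) and
   phi(n) / n <= phi(d) / d are needed, according to the sign of r. *)
Lemma weight_dvd d n : (0 < n)%nat -> (d %| n)%nat -> weight d * INR n <= weight n * INR d.
Proof.
move=> n_gt0 d_dv_n; have d_gt0 : (0 < d)%nat by apply: dvdn_gt0 d_dv_n.
have [le_tot le_ratio] := totient_dvd n_gt0 d_dv_n.
have td := INR_totient_gt0 d_gt0; have tn := INR_totient_gt0 n_gt0.
have dR := INR_gt0 d_gt0; have nR := INR_gt0 n_gt0.
rewrite -(exp_ln _ nR) -(exp_ln _ dR) !weightE -!exp_plus; apply: exp_le.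
have ln_tot : ln (INR (totient d)) <= ln (INR (totient n)) by apply/ln_le/INR_leq.
have ln_ratio : ln (INR (totient n)) + ln (INR d) <= ln (INR (totient d)) + ln (INR n).
  rewrite -!ln_mult // -!mult_INR; apply/ln_le/INR_leq => //.
  by rewrite mult_INR; apply: Rmult_lt_0_compat.
have ln_dn : ln (INR d) <= ln (INR n) by apply/ln_le/INR_leq/dvdn_leq.
by case: (Rle_lt_dec 0 r) => r_sign; nra.
Qed.

End Weight.

Section RealSums.
Variable I : finType.
Implicit Types (P : pred I) (F G : I -> R).

Lemma RsumE P F : \big[Rplus/0]_(i | P i) F i = \big[GRing.add/GRing.zero]_(i | P i) F i.
Proof. by []. Qed.

Lemma Rsum_le P F G : (forall i, P i -> F i <= G i) ->
  \big[Rplus/0]_(i | P i) F i <= \big[Rplus/0]_(i | P i) G i.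
Proof. by move=> le_FG; apply/RleP/ler_sum => i Pi; apply/RleP/le_FG. Qed.

Lemma Rsum_const P c : \big[Rplus/0]_(i | P i) c = INR #|P| * c.
Proof. by rewrite RsumE sumr_const -mulr_natl INRE. Qed.

Lemma Rsum_mull P F c :
  \big[Rplus/0]_(i | P i) (c * F i) = c * \big[Rplus/0]_(i | P i) F i.
Proof. by rewrite !RsumE -big_distrr. Qed.

Lemma Rsum_ge_term P F j : P j -> (forall i, P i -> 0 <= F i) ->
  F j <= \big[Rplus/0]_(i | P i) F i.
Proof.
move=> Pj F_ge0; rewrite RsumE (bigD1 j) //=.
have : 0 <= \big[Rplus/0]_(i | P i && (i != j)) F i.
  by apply/RleP/sumr_ge0 => i /andP[Pi _]; apply/RleP/F_ge0.
by rewrite RsumE => /RleP sum_ge0; apply/RleP; rewrite lerDl.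
Qed.

Lemma Rsum_gt0 P F j : P j -> (forall i, P i -> 0 < F i) ->
  0 < \big[Rplus/0]_(i | P i) F i.
Proof.
move=> Pj F_gt0; apply: Rlt_le_trans (F_gt0 j Pj) _.
by apply: Rsum_ge_term => // i Pi; apply/Rlt_le/F_gt0.
Qed.

Lemma Rsum_lt P F G j : P j -> (forall i, P i -> F i <= G i) -> F j < G j ->
  \big[Rplus/0]_(i | P i) F i < \big[Rplus/0]_(i | P i) G i.
Proof.
move=> Pj le_FG lt_j; rewrite !RsumE (bigD1 j Pj) (bigD1 j Pj) /=.
have : \big[Rplus/0]_(i | P i && (i != j)) F i <= \big[Rplus/0]_(i | P i && (i != j)) G i.
  by apply: Rsum_le => i /andP[Pi _]; apply: le_FG.
rewrite !RsumE /GRing.add /=; lra.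
Qed.

End RealSums.

Section RGCyclic.
Variables r s : R.

Lemma RGE (gT : finGroupType) (A : {set gT}) :
  RG A r s = \big[Rplus/0]_(x in A) weight r s #[x].
Proof. by []. Qed.

Lemma RG_gt0 (gT : finGroupType) (G : {group gT}) : 0 < RG G r s.
Proof. by apply: (Rsum_gt0 (group1 G)) => x _; apply: weight_gt0. Qed.

Lemma RG_isog (gT hT : finGroupType) (G : {group gT}) (H : {group hT}) :
  G \isog H -> RG G r s = RG H r s.
Proof.
case/isogP => f inj_f <-; rewrite !RGE morphimEdom !RsumE big_imset /=.
  by apply: eq_bigr => x Gx; rewrite order_injm.
by move=> x y Gx Gy /=; apply: (injmP inj_f).
Qed.

Lemma cyclic_Zp n : cyclic (Zp n).
Proof. by rewrite /Zp; case: ifP => _; [rewrite Zp_cycle cycle_cyclic | apply: cyclic1]. Qed.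

Lemma RG_cyclic (gT : finGroupType) (G : {group gT}) :
  cyclic G -> RG G r s = RC #|G| r s.
Proof. by move=> cycG; apply: RG_isog; rewrite isog_cyclic_card // cyclic_Zp card_Zp //=. Qed.

(* Generators contribute phi(n) * weight n, the identity contributes 1. *)
Lemma RG_cyclic_ge (gT : finGroupType) (G : {group gT}) :
  cyclic G -> (1 < #|G|)%nat ->
  INR (totient #|G|) * weight r s #|G| + 1 <= RG G r s.
Proof.
case/cyclicP => g G_eq G_gt1; pose gens := [set x | generator <[g]> x].
have gensP x : x \in gens -> x \in G /\ #[x] = #|G|.
  by rewrite inE /generator => /eqP gx_eq; rewrite G_eq gx_eq cycle_id.
rewrite RGE RsumE (bigID (mem gens)) /= -!RsumE; apply: Rplus_le_compat.
  rewrite (eq_bigr (fun _ => weight r s #|G|)); last first.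
    by move=> x /andP[_ /gensP[_ ->]].
  have card_gens : #|gens| = totient #|G| by rewrite -totient_gen G_eq.
  rewrite Rsum_const -card_gens; apply: Req_le; congr (INR _ * _).
  apply: eq_card => x; rewrite [RHS]unfold_in /=.
  by apply/idP/andP => [gx | [] //]; split => //; case: (gensP x gx).
rewrite -(weight1 r s) -(order1 gT); apply: (Rsum_ge_term (F := fun x => weight r s #[x])).
  rewrite group1 /=; apply/negP => /gensP[_]; rewrite order1 => G1.
  by rewrite -G1 in G_gt1.
by move=> x _; apply/Rlt_le/weight_gt0.
Qed.

End RGCyclic.

Section CyclicPGroup.
Variables (r s : R) (gT : finGroupType) (P : {group gT}) (p : nat).
Hypotheses (s_ge1 : 1 <= s) (r_le : r <= s - 1).
Hypotheses (p_pr : prime p) (pP : p.-group P) (cycP : cyclic P).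

Lemma RG_sub_le_weight (C : {group gT}) x : C \subset P -> x \in P :\: C ->
  INR p * RG C r s <= INR #|C| * weight r s #[x].
Proof.
move=> sCP PCx; rewrite RGE -[X in _ <= X * _]/(INR #|C|) -Rsum_const -Rsum_mull.
apply: Rsum_le => y Cy.
have [dv_yx le_pyx] := order_cyclic_pgroup_setD p_pr pP cycP sCP PCx Cy.
have := weight_dvd s_ge1 r_le (order_gt0 x) dv_yx.
have := INR_leq le_pyx; rewrite mult_INR.
have := weight_gt0 r s #[y]; have := weight_gt0 r s #[x].
have := INR_gt0 (order_gt0 y) => *.
by apply: (Rmult_le_reg_r (INR #[y])) => //; nra.
Qed.

(* With k = #|P : C| >= 2, the (k - 1) #|C| elements outside C contribute at
   least (k - 1) p RG C, and p >= 2. *)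
Lemma RG_index_lt (C : {group gT}) :
  C \proper P -> INR #|P : C| * RG C r s < RG P r s.
Proof.
move=> ltCP; have sCP := proper_sub ltCP.
have k_gt1 : (1 < #|P : C|)%nat by rewrite indexg_gt1 (proper_subn ltCP).
rewrite [RG P r s]RGE RsumE (big_setID C) /= (setIidPr sCP) -!RsumE -RGE.
set B := \big[Rplus/0]_(x in P :\: C) _; change (INR #|P : C| * RG C r s < RG C r s + B).
have le_B : INR #|P :\: C| * (INR p * RG C r s) <= INR #|C| * B.
  by rewrite -Rsum_const /B -Rsum_mull; apply: Rsum_le => x; apply: RG_sub_le_weight.
rewrite cardsD (setIidPr sCP) -(Lagrange sCP) minus_INR ?mult_INR in le_B; last first.
  by apply/leP; rewrite leq_pmulr // ltnW.
have A_gt0 := RG_gt0 r s C; have c_gt0 := INR_gt0 (cardG_gt0 C).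
have /= p_ge2 := INR_leq (prime_gt1 p_pr); have /= k_ge2 := INR_leq k_gt1.
set k := INR #|P : C| in le_B k_ge2 *; set c := INR #|C| in le_B c_gt0.
have le_B' : (k - 1) * (INR p * RG C r s) <= B by apply: (Rmult_le_reg_l c) => //; nra.
have : 0 < (k - 1) * RG C r s by nra.
nra.
Qed.

Lemma RG_index_le (C : {group gT}) :
  C \subset P -> INR #|P : C| * RG C r s <= RG P r s.
Proof.
move=> sCP; have [ltCP | ] := boolP (C \proper P); first by left; apply: RG_index_lt.
rewrite properE sCP /= negbK => sPC; have -> : C = P by apply/val_inj/eqP; rewrite eqEsubset sCP.
by rewrite indexgg /=; lra.
Qed.

End CyclicPGroup.

Section SylowQuotient.
Variables (r s : R) (gT : finGroupType) (G P : {group gT}) (p : nat).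
Hypotheses (s_ge1 : 1 <= s) (r_le : r <= s - 1).
Hypotheses (p_pr : prime p) (sylP : p.-Sylow(G) P) (nsPG : P <| G) (cycP : cyclic P).

Lemma weight_coset x : x \in G ->
  weight r s #[x] = weight r s #[x.`_p] * weight r s #[coset P x].
Proof.
move=> Gx; rewrite (order_coset_constt' sylP nsPG Gx) -weightM ?order_gt0 //.
  by rewrite !order_constt partnC.
by rewrite (pnat_coprime (p_elt_constt p x) (p_elt_constt p^' x)).
Qed.

Definition coset_weight (C : coset_of P) : R :=
  \big[Rplus/0]_(x in G | coset P x == C) weight r s #[x.`_p].

Lemma coset_weightE g : g \in G -> p^'.-elt g ->
  coset_weight (coset P g) = INR #|P : 'C_P[g]| * RG 'C_P[g] r s.
Proof.
move=> Gg p'g; rewrite /coset_weight RsumE.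
rewrite (partition_big (fun x => x.`_p^') (mem (g ^: P))) /=; last first.
  by move=> x /andP[Gx /eqP eq_x]; apply: (constt'_coset_class sylP nsPG cycP).
rewrite -RsumE (eq_bigr (fun _ => RG 'C_P[g] r s)) ?Rsum_const ?index_cent1 // => z gPz.
have p'z : p^'.-elt z by case/imsetP: gPz => u _ ->; rewrite p_eltJ.
rewrite -(cent1_class cycP gPz) RGE RsumE.
rewrite (eq_bigl (fun x => x \in (fun y => (y * z)%g) @: 'C_P[z])) => [|x]; last first.
  by rewrite -(coset_fibreE sylP nsPG x Gg p'g gPz) andbA.
rewrite big_imset /= => [|a b _ _]; last exact: mulIg.
apply: eq_bigr => y /subcent1P[Py cyz].
by have [-> _] := constt_mul_p'elt sylP Py p'z (commute_sym cyz).
Qed.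

Lemma coset_weight_constt' w : w \in G ->
  coset_weight (coset P w) = INR #|P : 'C_P[w.`_p^']| * RG 'C_P[w.`_p^'] r s.
Proof.
by move=> Gw; rewrite (coset_constt' sylP nsPG Gw) coset_weightE ?groupX ?p_elt_constt.
Qed.

Lemma coset_weight_le w : w \in G -> coset_weight (coset P w) <= RG P r s.
Proof.
move=> Gw; rewrite coset_weight_constt' //.
exact: RG_index_le s_ge1 r_le p_pr (pHall_pgroup sylP) cycP _ (subsetIl _ _).
Qed.

Lemma coset_weight_lt w : w \in G -> w \notin 'C(P) ->
  coset_weight (coset P w) < RG P r s.
Proof.
move=> Gw nCw; rewrite coset_weight_constt' //.
apply: RG_index_lt s_ge1 r_le p_pr (pHall_pgroup sylP) cycP _ _.
rewrite properE subsetIl /= subsetI subxx /= sub_cent1; apply: contra nCw => cPw'.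
rewrite -(consttC p w) groupM //.
exact: (subsetP (cyclic_abelian cycP)) (mem_constt_Sylow sylP nsPG Gw).
Qed.

Lemma coset_weight_central w : w \in G -> P \subset 'C(G) ->
  coset_weight (coset P w) = RG P r s.
Proof.
move=> Gw cPG; rewrite coset_weight_constt' //.
have -> : 'C_P[w.`_p^'] = P.
  by apply/setIidPl; rewrite sub_cent1 (subsetP _ _ (groupX _ Gw)) // centsC.
by rewrite indexgg /= Rmult_1_l.
Qed.

Lemma RG_coset_sum :
  RG G r s = \big[Rplus/0]_(C in (G / P)%g) (weight r s #[C] * coset_weight C).
Proof.
rewrite RGE (eq_bigr _ weight_coset) RsumE.
rewrite (partition_big (coset P) (mem (G / P)%g)) => [|x]; last exact: mem_quotient.
apply: eq_bigr => C _; rewrite /coset_weight -Rsum_mull RsumE.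
by apply: eq_bigr => x /andP[_ /eqP <-]; rewrite Rmult_comm.
Qed.

Lemma RG_mul_quotient :
  RG P r s * RG (G / P)%g r s = \big[Rplus/0]_(C in (G / P)%g) (weight r s #[C] * RG P r s).
Proof.
rewrite [RG (G / P)%g r s]RGE -Rsum_mull.
by apply: eq_bigr => C _; rewrite Rmult_comm.
Qed.

Lemma RG_le_mul_quotient : RG G r s <= RG P r s * RG (G / P)%g r s.
Proof.
rewrite RG_coset_sum RG_mul_quotient; apply: Rsum_le => _ /morphimP[w _ Gw ->].
by apply: Rmult_le_compat_l; [apply/Rlt_le/weight_gt0 | apply: coset_weight_le].
Qed.

Lemma RG_lt_mul_quotient : ~~ (P \subset 'C(G)) -> RG G r s < RG P r s * RG (G / P)%g r s.
Proof.
rewrite centsC => /subsetPn[w Gw nCw].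
rewrite RG_coset_sum RG_mul_quotient; apply: (Rsum_lt (j := coset P w)).
- exact: mem_quotient.
- move=> _ /morphimP[w' _ Gw' ->].
  by apply: Rmult_le_compat_l; [apply/Rlt_le/weight_gt0 | apply: coset_weight_le].
- by apply: Rmult_lt_compat_l; [apply: weight_gt0 | apply: coset_weight_lt].
Qed.

Lemma RG_eq_mul_quotient : P \subset 'C(G) -> RG G r s = RG P r s * RG (G / P)%g r s.
Proof.
move=> cPG; rewrite RG_coset_sum RG_mul_quotient.
by apply: eq_bigr => _ /morphimP[w _ Gw ->]; rewrite coset_weight_central.
Qed.

End SylowQuotient.

Lemma RC_mul_part r s n p : (0 < n)%nat -> prime p ->
  RC n r s = RC n`_p r s * RC (n %/ n`_p) r s.
Proof.
move=> n_gt0 p_pr; have [Q sylQ] := Sylow_exists p (Zp n).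
have cycZ := cyclic_Zp n; have sQZ := pHall_sub sylQ.
have cQZ : Q \subset 'C(Zp n) := subset_trans sQZ (cyclic_abelian cycZ).
have nsQZ : Q <| Zp n by rewrite -sub_abelian_normal ?cyclic_abelian.
rewrite /RC (RG_eq_mul_quotient r s sylQ nsQZ (cyclicS sQZ cycZ) cQZ).
rewrite (RG_cyclic r s (cyclicS sQZ cycZ)) (RG_cyclic r s (quotient_cyclic Q cycZ)).
by rewrite card_quotient ?normal_norm // -divgS // (card_Hall sylQ) card_Zp.
Qed.

Section NonCyclic.
Variables r s : R.
Hypotheses (s_ge1 : 1 <= s) (r_le : r <= s - 1).

Lemma RG_le_small_orders (gT : finGroupType) (G : {group gT}) :
  (1 < #|G|)%nat ->
  (forall x, x \in G -> (max_pdiv #|G| * #[x] <= #|G|)%nat) ->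
  RG G r s <= INR (totient #|G|) * weight r s #|G|.
Proof.
move=> G_gt1 small; set n := #|G| in G_gt1 small *.
have n_gt0 : (0 < n)%nat by apply: ltnW.
have p_pr : prime (max_pdiv n) := max_pdiv_prime G_gt1.
set p := max_pdiv n in small p_pr *.
have pR := INR_gt0 (prime_gt0 p_pr).
have le_n_ptot : INR n <= INR p * INR (totient n).
  rewrite -mult_INR; apply: INR_leq; rewrite -{1}(prednK (prime_gt0 p_pr)).
  apply: leq_mul_totient => // q q_pr q_dv_n; rewrite prednK ?prime_gt0 //.
  by apply: max_pdiv_max; rewrite mem_primes q_pr n_gt0.
have le_weight x : x \in G -> INR p * weight r s #[x] <= weight r s n.
  move=> Gx; have := weight_dvd s_ge1 r_le n_gt0 (order_dvdG Gx).
  have := INR_leq (small x Gx); rewrite mult_INR.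
  have := weight_gt0 r s #[x]; have := INR_gt0 (order_gt0 x) => *.
  by apply: (Rmult_le_reg_r (INR #[x])) => //; nra.
apply: (Rmult_le_reg_l (INR p)) => //.
apply: Rle_trans (_ : INR n * weight r s n <= _); last first.
  by have := weight_gt0 r s n; nra.
rewrite RGE -Rsum_mull -[X in _ <= X * _]/(INR #|G|) -Rsum_const.
by apply: Rsum_le.
Qed.

Lemma RG_lt_RC_small_orders (gT : finGroupType) (G : {group gT}) :
  (1 < #|G|)%nat -> (forall x, x \in G -> (max_pdiv #|G| * #[x] <= #|G|)%nat) ->
  RG G r s < RC #|G| r s.
Proof.
move=> G_gt1 small; have := RG_le_small_orders G_gt1 small.
have := RG_cyclic_ge r s (cyclic_Zp #|G|); rewrite card_Zp ?(ltnW G_gt1) // /RC.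
move/(_ G_gt1) => ge_RC le_RG; apply: Rle_lt_trans le_RG (Rlt_le_trans _ _ _ _ ge_RC).
lra.
Qed.

Lemma RG_lt_RC (gT : finGroupType) (G : {group gT}) :
  ~~ cyclic G -> RG G r s < RC #|G| r s.
Proof.
move oG: #|G| => n; elim/ltn_ind: n gT G oG => n IH gT G oG ncycG.
have G_gt1 : (1 < n)%nat.
  by rewrite ltnNge; apply: contra ncycG => le_n1; rewrite cyclic_small // oG (leq_trans le_n1).
have n_gt0 : (0 < n)%nat by apply: ltnW.
have p_pr : prime (max_pdiv n) := max_pdiv_prime G_gt1; set p := max_pdiv n in p_pr.
have [small | /forall_inPn[x Gx]] := boolP [forall x in G, p * #[x] <= n]%nat.
  by rewrite -oG; apply: RG_lt_RC_small_orders => [|x Gx]; rewrite oG // (forall_inP small).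
rewrite -ltnNge -{1}oG => big_x.
have [P [sylP nsPG cycP]] := normal_cyclic_Sylow_of_elt p_pr Gx big_x.
have oP : #|P| = (n`_p)%nat by rewrite (card_Hall sylP) oG.
have oQ : #|(G / P)%g| = (n %/ n`_p)%nat.
  by rewrite card_quotient ?normal_norm // -divgS ?normal_sub // oP oG.
have lt_Q : (#|(G / P)%g| < n)%nat by rewrite oQ ltn_Pdiv // p_part_gt1 pi_max_pdiv.
rewrite (RC_mul_part r s n_gt0 p_pr) -oQ -oP -(RG_cyclic r s cycP).
have [cycQ | ncycQ] := boolP (cyclic (G / P)).
  rewrite -(RG_cyclic r s cycQ); apply: (RG_lt_mul_quotient s_ge1 r_le p_pr sylP nsPG cycP).
  by apply: contra ncycG => cPG; apply: (cyclic_central_Sylow sylP nsPG cycP cPG cycQ).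
apply: Rle_lt_trans (RG_le_mul_quotient s_ge1 r_le p_pr sylP nsPG cycP) _.
exact: Rmult_lt_compat_l (RG_gt0 r s P) (IH _ lt_Q _ _ (erefl _) ncycQ).
Qed.

End NonCyclic.

Theorem mainTheorem6 (r s : R) (hs : (1 <= s)%R) (hrs : (r <= s - 1)%R)
  (gT : finGroupType) (G : {group gT}) :
  (TG G r s <= 0)%R /\ (TG G r s = 0%R <-> cyclic G).
Proof.
rewrite /TG; have [cycG | ncycG] := boolP (cyclic G).
  by rewrite (RG_cyclic r s cycG) Rminus_diag; split; [apply: Rle_refl | split].
have lt_G := Rlt_minus _ _ (RG_lt_RC hs hrs ncycG).
split; first exact: Rlt_le.
by split => [TG0 | //]; move: lt_G; rewrite TG0 => /Rlt_irrefl.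
Qed.
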